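(* Every normal finite $C$-space is weakly infinite-dimensional in the sense of Smirnov.
   Context: A set is functionally open if it is a cozero set. $X$ is a finite $C$-space if for every sequence $\{\omega_n\}$ of finite covers of $X$ by functionally open sets there exist $k$ and finite families $\gamma_1,\dots,\gamma_k$ of pairwise disjoint functionally open sets such that each $\gamma_n$ refines $\omega_n$ and $\bigcup_{n=1}^k\gamma_n$ covers $X$. A normal space $X$ is weakly infinite-dimensional in the sense of Smirnov if for every sequence $\{(A_i,B_i)\}_{i\in\mathbb N}$ of pairs of disjoint closed subsets of $X$ there exist partitions $L_i$ between $A_i$ and $B_i$ and $k$ such that $\bigcap_{i=1}^k L_i=\emptyset$. *)

From HB Require Import structures.
From mathcomp Require Import all_boot all_order all_algebra.
From mathcomp Require Import all_classical all_reals all_analysis.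
From mathcomp Require Import Rstruct Rstruct_topology.
From Stdlib Require Import Reals.

Set Implicit Arguments.
Unset Strict Implicit.
Unset Printing Implicit Defensive.

Local Open Scope classical_set_scope.

Definition functionally_open {X : topologicalType} (A : set X) : Prop :=
  exists f : X -> R, continuous f /\ A = [set x | f x <> 0%R].

Definition fo_finite_cover {X : topologicalType} (m : nat) (W : nat -> set X) :=
  (forall i, (i < m)%N -> functionally_open (W i)) /\
  (forall x : X, exists2 i, (i < m)%N & W i x).

Definition finite_C_space (X : topologicalType) : Prop :=
  forall (m : nat -> nat) (W : nat -> nat -> set X),
    (forall n, fo_finite_cover (m n) (W n)) ->
    exists (k : nat) (p : nat -> nat) (G : nat -> nat -> set X),
      (* gamma_1, ..., gamma_k, here indexed by n < k *)
      (forall n, (n < k)%N ->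
         (forall i, (i < p n)%N -> functionally_open (G n i)) /\
         (forall i j, (i < p n)%N -> (j < p n)%N -> i <> j ->
            G n i `&` G n j = set0) /\
         (forall i, (i < p n)%N ->
            exists2 j, (j < m n)%N & G n i `<=` W n j)) /\
      (forall x : X, exists n i, [/\ (n < k)%N, (i < p n)%N & G n i x]).

Definition partition_between {X : topologicalType} (A B L : set X) : Prop :=
  exists U V : set X, [/\ open U /\ open V, U `&` V = set0,
    A `<=` U, B `<=` V & ~` L = U `|` V].

Definition smirnov_wid (X : topologicalType) : Prop :=
  forall A B : nat -> set X,
    (forall i, closed (A i) /\ closed (B i) /\ A i `&` B i = set0) ->
    exists (L : nat -> set X) (k : nat),
      (forall i, partition_between (A i) (B i) (L i)) /\
      (0 < k)%N /\
      [set x | forall i, (i < k)%N -> L i x] = set0.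

(** Take Urysohn functions [f_n] with [f_n < -1] on [A_n] and [f_n > 1] on
    [B_n], and apply the finite C-space property to the two-element covers
    [{f_n < 1}, {f_n > -1}]: this yields families [γ_1, ..., γ_k] of pairwise
    disjoint open sets, [γ_n] refining the [n]-th cover, which jointly cover
    [X]. Adding the members of [γ_n] contained in [{f_n < 1}] to [{f_n < -1}]
    and the remaining ones (contained in [{f_n > -1}]) to [{f_n > 1}] gives
    open neighbourhoods of [A_n] and [B_n] that stay disjoint because [γ_n] is.
    The complement [L_n] of their union is a partition between [A_n] and [B_n]
    missing every member of [γ_n], so [L_1, ..., L_k] have empty intersection. *)

From Stdlib Require Import Reals.
From mathcomp Require Import all_boot all_order all_algebra.
From mathcomp Require Import all_classical all_reals all_analysis.
From mathcomp Require Import Rstruct Rstruct_topology lra.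
Set Implicit Arguments.
Unset Strict Implicit.
Unset Printing Implicit Defensive.

Local Open Scope classical_set_scope.
Local Open Scope ring_scope.
Import Order.TTheory GRing.Theory Num.Theory.

Lemma cozero_functionally_open (X : topologicalType) (f : X -> R) :
  continuous f -> functionally_open [set x | f x != 0].
Proof. by exists f; split=> //; apply/seteqP; split=> x /= /eqP. Qed.

Lemma functionally_open_ltr (c : R) : functionally_open [set y : R | y < c].
Proof.
have cB : continuous (fun y : R => y - c).
  by move=> y; apply: (@continuousB _ R^o); [exact: cvg_id | exact: cvg_cst].
have -> : [set y : R | y < c] = [set y | (y - c) - `|y - c| != 0].
  apply/seteqP; split=> y /=; case: (ltP y c) => yc //.
  - by rewrite ltr0_norm ?subr_lt0 // opprK -mulr2n mulrn_eq0 subr_eq0 (lt_eqF yc).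
  - by rewrite ger0_norm ?subr_ge0 // subrr eqxx.
apply: cozero_functionally_open => y.
apply: (@continuousB _ R^o R (fun y => y - c) (fun y => `|y - c|)); first exact: cB.
exact: (continuous_comp (cB y) (@norm_continuous _ R^o _)).
Qed.

Lemma functionally_open_preimage (X Y : topologicalType) (g : X -> Y) (A : set Y) :
  continuous g -> functionally_open A -> functionally_open (g @^-1` A).
Proof.
move=> cg [f [cf ->]]; exists (f \o g); split=> //.
by move=> x; apply: continuous_comp; [exact: cg | exact: cf].
Qed.

Lemma functionally_open_gtr (c : R) : functionally_open [set y : R | c < y].
Proof.
have -> : [set y : R | c < y] = -%R @^-1` [set z | z < - c].
  by apply/seteqP; split=> y /=; rewrite ltrN2.
exact: functionally_open_preimage (@opp_continuous R^o) (functionally_open_ltr _).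
Qed.

Lemma functionally_open_open (X : topologicalType) (A : set X) :
  functionally_open A -> open A.
Proof.
move=> [f [cf ->]].
rewrite (_ : [set x | _] = f @^-1` [set y : R | y != 0]); last first.
  by apply/seteqP; split=> x /= /eqP.
by apply: open_comp; [move=> x _; exact: cf | exact: open_neq].
Qed.

Definition threshold_cover {X : topologicalType} (f : X -> R) (c d : R) : nat -> set X :=
  fun j => if j == 0%N then [set x | f x < d] else [set x | c < f x].

Lemma threshold_cover_fo_finite_cover (X : topologicalType) (f : X -> R) (c d : R) :
  continuous f -> c < d -> fo_finite_cover 2 (threshold_cover f c d).
Proof.
move=> cf cd; split=> [[|[|]] // _|x].
- exact: functionally_open_preimage cf (functionally_open_ltr d).
- exact: functionally_open_preimage cf (functionally_open_gtr c).
- case: (ltP (f x) d) => fxd; first by exists 0%N.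
  by exists 1%N => //; rewrite /threshold_cover /=; lra.
Qed.

Lemma normal_separating_function (X : topologicalType) (A B : set X) :
  normal_space X -> closed A -> closed B -> A `&` B = set0 ->
  exists f : X -> R,
    [/\ continuous f, A `<=` [set x | f x < -1] & B `<=` [set x | 1 < f x]].
Proof.
move=> nX cA cB AB0.
have [|f [cf fA fB _]] := @urysohn_ext_itv X R nX A B (-2) 2 cA cB AB0; first lra.
exists f; split=> // x ?.
- by rewrite /= (fA (f x)) /=; [lra | exists x].
- by rewrite /= (fB (f x)) /=; [lra | exists x].
Qed.

Section SwellByDisjointOpenFamily.
Context {X : topologicalType} {I : Type}.
Variables (U V W0 W1 : set X) (D : set I) (G : I -> set X).
Hypotheses (oU : open U) (oV : open V) (UV0 : U `&` V = set0).
Hypotheses (UW10 : U `&` W1 = set0) (VW00 : V `&` W0 = set0).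
Hypotheses (oG : forall i, D i -> open (G i)) (tG : trivIset D G).
Hypothesis GW : forall i, D i -> G i `<=` W0 \/ G i `<=` W1.

Lemma disjoint_open_swell : exists U' V' : set X,
  [/\ open U' /\ open V', U' `&` V' = set0, U `<=` U', V `<=` V'
    & \bigcup_(i in D) G i `<=` U' `|` V'].
Proof.
pose D0 := [set i | D i /\ G i `<=` W0].
pose D1 := [set i | D i /\ ~ G i `<=` W0].
have G1W1 i : D1 i -> G i `<=` W1 by move=> [Di nGW0]; case: (GW Di).
exists (U `|` \bigcup_(i in D0) G i), (V `|` \bigcup_(i in D1) G i); split.
- by split; apply: openU => //; apply: bigcup_open => i [/oG].
- move: UV0 UW10 VW00.
  move=> /disjoints_subset UnV /disjoints_subset UnW1 /disjoints_subset VnW0.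
  apply/seteqP; split=> // x [[Ux|[i [Di GiW0] Gix]] [Vx|[j [Dj GjW0] Gjx]]].
  + exact: UnV x Ux Vx.
  + exact: UnW1 x Ux (G1W1 j (conj Dj GjW0) x Gjx).
  + exact: VnW0 x Vx (GiW0 x Gix).
  + have ij : i = j by apply: tG => //; exists x.
    by subst j; apply: GjW0.
- by move=> x Ux; left.
- by move=> x Vx; left.
- move=> x [i Di Gix]; case: (pselect (G i `<=` W0)) => GiW0.
  + by left; right; exists i.
  + by right; right; exists i.
Qed.

End SwellByDisjointOpenFamily.

Lemma partition_between_avoiding (X : topologicalType) (I : Type)
    (A B : set X) (f : X -> R) (D : set I) (G : I -> set X) :
  continuous f -> A `<=` [set x | f x < -1] -> B `<=` [set x | 1 < f x] ->
  (forall i, D i -> open (G i)) -> trivIset D G ->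
  (forall i, D i -> G i `<=` [set x | f x < 1] \/ G i `<=` [set x | -1 < f x]) ->
  exists L, partition_between A B L /\ \bigcup_(i in D) G i `<=` ~` L.
Proof.
move=> cf fA fB oG tG GW.
have open_preimage (P : set R) : open P -> open (f @^-1` P).
  by move=> oP; apply: open_comp => // x _; exact: cf.
have lt_gt0 : [set x | f x < -1] `&` [set x | 1 < f x] = set0.
  by apply/seteqP; split=> // x /= []; lra.
have lt_gtN0 : [set x | f x < -1] `&` [set x | -1 < f x] = set0.
  by apply/seteqP; split=> // x /= []; lra.
have gt_lt0 : [set x | 1 < f x] `&` [set x | f x < 1] = set0.
  by apply/seteqP; split=> // x /= []; lra.
have [U [V [[oU oV] UV0 fU fV GUV]]] := disjoint_open_swell
  (open_preimage _ (@open_lt R (-1))) (open_preimage _ (@open_gt R 1))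
  lt_gt0 lt_gtN0 gt_lt0 oG tG GW.
exists (~` (U `|` V)); split; last by move=> x /GUV UVx; apply.
exists U, V; split=> //; last by rewrite setCK.
- by move=> x /fA /fU.
- by move=> x /fB /fV.
Qed.

Theorem lemma2p3 (X : topologicalType) :
  normal_space X -> finite_C_space X -> smirnov_wid X.
Proof.
move=> nX cX A B ABcl.
have /choice[f fAB] : forall n, exists f : X -> R,
    [/\ continuous f, A n `<=` [set x | f x < -1] & B n `<=` [set x | 1 < f x]].
  move=> n; have [cA [cB AB0]] := ABcl n.
  exact: normal_separating_function.
(* Arguments of type [R] are parsed in Stdlib's [R_scope] unless marked. *)
have cover n : fo_finite_cover 2 (threshold_cover (f n) (-1)%R 1%R).
  by have [cf _ _] := fAB n; apply: threshold_cover_fo_finite_cover => //; lra.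
have [k [p [G [gammaP coverG]]]] := cX _ _ cover.
have /choice[L AGL] : forall n, exists L : set X, partition_between (A n) (B n) L /\
    \bigcup_(j in [set j | (n < k)%N /\ (j < p n)%N]) G n j `<=` ~` L.
  move=> n; have [cf fA fB] := fAB n.
  apply: (partition_between_avoiding cf fA fB).
  - move=> j [nk jp]; have [foG _] := gammaP n nk; exact/functionally_open_open/foG.
  - apply/trivIsetP => i j [nk ip] [_ jp] ij.
    by have [_ [disj _]] := gammaP n nk; apply: disj => //; exact/eqP.
  - move=> j [nk jp]; have [_ [_ GW]] := gammaP n nk.
    by have [[|[|]] // _ Gj] := GW j jp; [left | right].
exists L, k.+1; split; first by move=> n; case: (AGL n).
split=> //; apply/seteqP; split=> // x /= Lx.
have [n [j [nk jp Gx]]] := coverG x.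
by apply: (proj2 (AGL n) x) (Lx n (ltnW nk)); exists j.
Qed.
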